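(* Let $n\geq 2$ and $q=2^m\geq 4$. Let $B_n\in\mathrm{GL}_{n+1}(\mathbb{F}_q)$ be the matrix $E_{1,2}+E_{2,3}+\cdots+E_{n,n+1}+E_{n+1,1}$, where $E_{i,j}$ is the $(n+1)\times(n+1)$ matrix with $1$ in entry $(i,j)$ and $0$ elsewhere. Then the permutation of $\mathbb{P}^n(\mathbb{F}_q)$ induced by $B_n$ (acting on column vectors of homogeneous coordinates) is even. *)

From HB Require Import structures.
From mathcomp Require Import all_boot all_order all_algebra all_fingroup all_field.
Set Implicit Arguments. Unset Strict Implicit. Unset Printing Implicit Defensive.
Import GRing.Theory.
Local Open Scope ring_scope.

Definition pline (F : finFieldType) (k : nat) (v : 'cV[F]_k) : {set 'cV[F]_k} :=
  [set c *: v | c : F].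

Definition is_ppoint (F : finFieldType) (k : nat) (L : {set 'cV[F]_k}) : bool :=
  [exists v : 'cV[F]_k, (v != 0) && (L == pline v)].

(* The projective space P^{k-1}(F), as a finite type. *)
Definition proj_space (F : finFieldType) (k : nat) : finType :=
  {L : {set 'cV[F]_k} | is_ppoint L}.

(* The matrix B_n = E_{1,2} + E_{2,3} + ... + E_{n,n+1} + E_{n+1,1} of size
   (n+1) x (n+1); with 0-based indices, entry (i,j) is 1 iff j = i+1 mod (n+1). *)
Definition Bmx (F : finFieldType) (n : nat) : 'M[F]_(n.+1) :=
  \matrix_(i < n.+1, j < n.+1) (if (j : nat) == (i.+1 %% n.+1)%N then 1 else 0).

Definition induced_by (F : finFieldType) (k : nat) (A : 'M[F]_k)
    (s : {perm proj_space F k}) : Prop :=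
  forall L : proj_space F k, val (s L) = (fun v => A *m v) @: val L.

From mathcomp Require Import all_boot all_algebra all_fingroup all_solvable all_field.
Set Implicit Arguments. Unset Strict Implicit. Unset Printing Implicit Defensive.
Import GRing.Theory.
Local Open Scope ring_scope.

(* Permuting coordinates permutes the points of P^{k-1}(F), anti-homomorphically
   in the permutation, and B_n is the permutation matrix of an (n+1)-cycle; so it
   suffices that every transposition (x y) of coordinates induces an even
   permutation. That permutation is an involution. In characteristic 2 its fixed
   points are the lines with v_x = v_y, and each moved line has a unique
   representative with v_x + v_y = 1; these representatives form an affine
   hyperplane of q^n vectors. Hence the involution is a product of q^n / 2 disjoint
   transpositions, an even number because q is even and n >= 2. *)

Section Involution.
Variable T : finType.

Lemma odd_perm_involutive (t : {perm T}) :
  involutive t -> odd_perm t = odd #|[set z | t z != z]|./2.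
Proof.
have [m] := ubnP #|[set z | t z != z]|; elim: m t => // m IHm t lt_moved_m tK.
have [a moved_a | fixed] := pickP (fun z => t z != z); last first.
  have -> : [set z | t z != z] = set0 by apply/setP => z; rewrite !inE fixed.
  have -> : t = 1%g by apply/permP => z; rewrite perm1; apply/eqP/negbFE/fixed.
  by rewrite cards0 odd_perm1.
set b := t a; set ab := [set a; b].
have ab_neq : a != b by rewrite eq_sym.
have t_ab z : (t z \in ab) = (z \in ab).
  by rewrite !inE -{1}(tK a) !(inj_eq perm_inj) orbC.
set u := (t * tperm a b)%g.
have uE z : u z = if z \in ab then z else t z.
  rewrite permM; case: ifP => [|z_ab]; last first.
    by apply: tpermD; apply: contraFneq z_ab => tz; rewrite -t_ab -tz !inE eqxx ?orbT.
  by rewrite !inE => /orP [] /eqP ->; rewrite ?tpermR // -{1}(tK a) tpermL.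
have uK : involutive u.
  move=> z; rewrite [u z]uE; case: ifP => z_ab; by rewrite uE ?z_ab // t_ab z_ab tK.
have moved_u : [set z | u z != z] = [set z | t z != z] :\: ab.
  apply/setP => z; have [z_ab|z_ab] := boolP (z \in ab);
  by rewrite in_setD z_ab !inE uE ?z_ab ?(negbTE z_ab) ?eqxx.
have card_moved : #|[set z | t z != z]| = #|[set z | u z != z]|.+2.
  have ab_moved : ab \subset [set z | t z != z].
    by apply/subsetP => z; rewrite !inE => /orP [] /eqP ->; rewrite ?tK eq_sym.
  by rewrite -(cardsID ab) (setIidPr ab_moved) cards2 ab_neq moved_u.
rewrite card_moved in lt_moved_m *.
have -> : t = (u * tperm a b)%g by rewrite -mulgA tperm2 mulg1.
by rewrite odd_permM odd_tperm ab_neq IHm ?addbT //; apply: ltnW.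
Qed.
End Involution.

Lemma pchar2_card_even (F : finFieldType) : 2%N \in [pchar F] -> (2 %| #|F|)%N.
Proof.
move=> F2; have [|_ ] := pgroup_pdiv (pprimeChar_pgroup F2).
  by rewrite -cardG_gt1 cardsT card_finNzRing_gt1.
by rewrite cardsT.
Qed.

Lemma even_half_expn (q n : nat) : (2 %| q)%N -> (1 < n)%N -> ~~ odd (q ^ n)./2.
Proof.
move=> q_even n_gt1; have four_dvd : (2 * 2 %| q ^ n)%N.
  exact: dvdn_trans (dvdn_exp2r 2 q_even) (dvdn_exp2l q n_gt1).
rewrite -dvdn2 -divn2 dvdn_divRL //.
exact: dvdn_trans (dvdn_mulr 2 (dvdnn 2)) four_dvd.
Qed.

Section ProjectiveAction.
Variables (F : finFieldType) (k : nat).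
Implicit Types (v : 'cV[F]_k) (s : 'S_k) (L : proj_space F k).

Lemma pline_id v : v \in pline v.
Proof. by apply/imsetP; exists 1; rewrite ?scale1r. Qed.

Lemma pline_scale_eq v (c : F) : c != 0 -> pline (c *: v) = pline v.
Proof.
move=> c_neq0; apply/setP => u; apply/imsetP/imsetP => [[d _ ->]|[d _ ->]].
  by exists (d * c); rewrite ?scalerA.
by exists (d / c); rewrite ?scalerA ?mulfVK.
Qed.

Lemma pline_eqP u v : pline u = pline v -> exists c : F, u = c *: v.
Proof.
move=> uv; have /imsetP[c _ ->] : u \in pline v by rewrite -uv pline_id.
by exists c.
Qed.

Lemma pline_ppoint v : v != 0 -> is_ppoint (pline v).
Proof. by move=> v_neq0; apply/existsP; exists v; rewrite v_neq0 eqxx. Qed.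

Lemma mulmx_pline (A : 'M[F]_k) v : mulmx A @: pline v = pline (A *m v).
Proof. by rewrite -imset_comp; apply: eq_imset => c /=; rewrite scalemxAr. Qed.

Lemma perm_mx_ppoint s (L : {set 'cV[F]_k}) :
  is_ppoint L -> is_ppoint (mulmx (perm_mx s) @: L).
Proof.
case/existsP => v /andP[v_neq0 /eqP ->]; rewrite mulmx_pline; apply: pline_ppoint.
by apply: contra v_neq0 => /eqP/(congr1 (mulmx (invmx (perm_mx s))));
   rewrite mulKmx ?unitmx_perm // mulmx0 => ->.
Qed.

Definition proj_act s L : proj_space F k :=
  exist (fun M : {set 'cV[F]_k} => is_ppoint M) _ (perm_mx_ppoint s (valP L)).

Lemma proj_actM s t L : proj_act s (proj_act t L) = proj_act (s * t) L.
Proof.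
apply: val_inj; rewrite /= -imset_comp.
by apply: eq_imset => v; rewrite /= perm_mxM mulmxA.
Qed.

Lemma proj_act1 L : proj_act 1 L = L.
Proof.
apply: val_inj; rewrite /= -[RHS]imset_id.
by apply: eq_imset => v; rewrite /= perm_mx1 mul1mx.
Qed.

Lemma proj_actK s : cancel (proj_act s) (proj_act s^-1).
Proof. by move=> L; rewrite proj_actM mulVg proj_act1. Qed.

Definition proj_perm s : {perm proj_space F k} := perm (can_inj (proj_actK s)).

Lemma proj_permE s L : val (proj_perm s L) = mulmx (perm_mx s) @: val L.
Proof. by rewrite permE. Qed.

Lemma proj_perm_induced s : induced_by (perm_mx s) (proj_perm s).
Proof. exact: proj_permE. Qed.

Lemma proj_permM s t : proj_perm (s * t) = (proj_perm t * proj_perm s)%g.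
Proof. by apply/permP => L; rewrite permM !permE proj_actM. Qed.

Lemma proj_perm1 : proj_perm 1 = 1%g.
Proof. by apply/permP => L; rewrite perm1 permE proj_act1. Qed.

Lemma even_proj_perm s :
  (forall x y : 'I_k, x != y -> ~~ odd_perm (proj_perm (tperm x y))) ->
  ~~ odd_perm (proj_perm s).
Proof.
move=> even_tperm; have [ts -> dts] := prod_tpermP s.
elim: ts dts => [|t ts IHts] /=; first by rewrite big_nil proj_perm1 odd_perm1.
case/andP => dt dts; rewrite big_cons proj_permM odd_permM (negbTE (IHts dts)).
by rewrite addFb; apply: even_tperm.
Qed.

End ProjectiveAction.

Section Transposition.
Variables (F : finFieldType) (k : nat) (x y : 'I_k).
Hypotheses (x_neq_y : x != y) (F2 : 2%N \in [pchar F]).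

Definition coord_sum_fiber (c : F) : {set 'cV[F]_k} :=
  [set w : 'cV[F]_k | w x 0 + w y 0 == c].

Lemma card_coord_sum_fiber_const c :
  #|coord_sum_fiber c| = #|coord_sum_fiber 0|.
Proof.
rewrite -(card_preimset _ (addIr (c *: delta_mx y 0))); apply: eq_card => w.
rewrite !inE !mxE !eqxx (negbTE x_neq_y) /= mulr0 mulr1 addr0 addrA.
by rewrite -subr_eq0 addrK.
Qed.

Lemma card_coord_sum_fiber c : #|coord_sum_fiber c| = (#|F| ^ k.-1)%N.
Proof.
have F_gt0 : (0 < #|F|)%N := ltnW (card_finNzRing_gt1 F).
have k_gt0 : (0 < k)%N := leq_ltn_trans (leq0n x) (ltn_ord x).
have partition : #|{: 'cV[F]_k}| = (\sum_(d : F) #|coord_sum_fiber d|)%N.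
  rewrite -sum1_card (partition_big (fun w : 'cV[F]_k => w x 0 + w y 0) xpredT) //=.
  by apply: eq_bigr => d _; rewrite -sum1_card; apply: eq_bigl => w; rewrite inE.
apply/eqP; rewrite -(eqn_pmul2l F_gt0) -expnS prednK // -[k in (_ ^ k)%N]muln1.
rewrite -card_mx partition (eq_bigr _ (fun d _ => card_coord_sum_fiber_const d)).
by rewrite sum_nat_const card_coord_sum_fiber_const.
Qed.

Lemma pline_tperm_fixed v :
  (pline (perm_mx (tperm x y) *m v) == pline v) = (v \in coord_sum_fiber 0).
Proof.
rewrite inE; apply/eqP/idP => [fixed | sum0].
  have [c tv] := pline_eqP fixed.
  have := congr1 (fun w : 'cV[F]_k => w x 0) tv.
  have := congr1 (fun w : 'cV[F]_k => w y 0) tv.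
  rewrite -row_permE !mxE tpermL tpermR => vx vy.
  (* Swapping v_x and v_y scales v by c, so (v_x + v_y) (1 + c) = 2 (v_x + v_y). *)
  have : (v x 0 + v y 0) * (1 + c) == 0.
    by rewrite mulrDr mulr1 mulrDl ![_ * c]mulrC -vx -vy [v y 0 + _]addrC addrr_pchar2.
  rewrite mulf_eq0 => /orP [// | ]; rewrite addr_eq0 oppr_pchar2 // => /eqP c1.
  by rewrite vy -c1 mul1r addrr_pchar2.
congr pline; apply/matrixP => i j; rewrite (ord1 j) -row_permE mxE.
move: sum0; rewrite addr_eq0 oppr_pchar2 // => /eqP vx_vy.
by case: tpermP => [->|->|]; rewrite ?vx_vy.
Qed.

Lemma proj_perm_tperm_moved :
  val @: [set L | proj_perm F (tperm x y) L != L] =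
  [set pline w | w in coord_sum_fiber 1].
Proof.
apply/setP => M; apply/imsetP/imsetP => [[L moved_L ->] | [w w_sum1 ->]].
  case/existsP: (valP L) => v /andP[v_neq0 /eqP Lv].
  have sum_neq0 : v x 0 + v y 0 != 0.
    rewrite inE in moved_L; apply: contra moved_L => sum0; apply/eqP/val_inj/eqP.
    by rewrite proj_permE Lv mulmx_pline pline_tperm_fixed inE.
  exists ((v x 0 + v y 0)^-1 *: v); first by rewrite inE !mxE -mulrDr mulVf.
  by rewrite Lv pline_scale_eq ?invr_eq0.
have w_neq0 : w != 0.
  by apply: contraTneq w_sum1 => ->; rewrite inE !mxE addr0 eq_sym oner_eq0.
exists (exist (fun M : {set 'cV[F]_k} => is_ppoint M) _ (pline_ppoint w_neq0)) => //.
rewrite inE; apply: contraTneq w_sum1 => /(congr1 val)/eqP.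
rewrite proj_permE /= mulmx_pline pline_tperm_fixed !inE => /eqP ->.
by rewrite eq_sym oner_eq0.
Qed.

Lemma card_proj_perm_tperm_moved :
  #|[set L | proj_perm F (tperm x y) L != L]| = (#|F| ^ k.-1)%N.
Proof.
rewrite -(card_imset _ val_inj) proj_perm_tperm_moved card_in_imset.
  exact: card_coord_sum_fiber.
move=> w1 w2 w1_sum1; rewrite inE => /eqP w2_sum1 /pline_eqP[c w1E].
move: w1_sum1; rewrite w1E inE !mxE -mulrDr w2_sum1 mulr1 => /eqP ->.
by rewrite scale1r.
Qed.

Lemma even_proj_perm_tperm : (2 < k)%N -> ~~ odd_perm (proj_perm F (tperm x y)).
Proof.
move=> k_gt2; rewrite odd_perm_involutive; last first.
  by move=> L; rewrite -permM -proj_permM tperm2 proj_perm1 perm1.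
rewrite card_proj_perm_tperm_moved even_half_expn ?pchar2_card_even //.
by rewrite ltn_predRL.
Qed.

End Transposition.

Definition cycle_shift n : 'S_n.+1 := perm (@ordS_inj n.+1).

Lemma Bmx_perm_mx (F : finFieldType) n : Bmx F n = perm_mx (cycle_shift n).
Proof. by apply/matrixP => i j; rewrite !mxE permE -val_eqE eq_sym; case: eqP. Qed.

Theorem lemma3p3 (F : finFieldType) (n : nat)
    (hn : (2 <= n)%N) (hchar : 2%N \in [pchar F]) (hq : (4 <= #|F|)%N) :
  exists s : {perm proj_space F n.+1},
    induced_by (Bmx F n) s /\ odd_perm s = false.
Proof.
exists (proj_perm F (cycle_shift n)); split.
  by rewrite Bmx_perm_mx; apply: proj_perm_induced.
by apply/negbTE/even_proj_perm => x y x_neq_y; apply: even_proj_perm_tperm.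
Qed.
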